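(* Let $G=(V,E)$ be a finite graph, $A\subset V$, $\xi_1,\xi_2\in\{-1,1\}^A$ boundary conditions, $h\in\mathbb R^V$ an arbitrary external field and $T>0$. Then for any two increasing events $\mathtt A,\mathtt B\subset\Theta^{\bar G}$, $$\bar\mu^{\xi_1/\xi_2}_{G,h}(\mathtt A\cap\mathtt B)\ge\bar\mu^{\xi_1/\xi_2}_{G,h}(\mathtt A)\,\bar\mu^{\xi_1/\xi_2}_{G,h}(\mathtt B).$$
   Context: Extended Ising model: for a finite graph $G=(V,E)$ let $\bar G=V\cup E$. An extended configuration $\bar\sigma$ assigns $\bar\sigma_v\in\{-1,1\}$ to each $v\in V$ and $\bar\sigma_e\in\{-1,0,1\}$ to each $e\in E$, subject to $|\bar\sigma_v-\bar\sigma_e|\le1$ whenever $v$ is an endpoint of $e$. For $T>0$ and $h\in\mathbb R^V$, $\bar\mu_{G,h}(\bar\sigma)\propto\prod_{e\in E}\prod_{v\in e}W(\bar\sigma_v,\bar\sigma_e)\cdot\exp\big(\frac1T\sum_{v\in V}h_v\bar\sigma_v\big)$, where $W(a,b)=1$ if $b=a$, $W(a,b)=t$ if $b=0$, $W(a,b)=0$ if $b=-a$, and $t=(e^{2/T}-1)^{-1/2}$. For $A\subset V$ and $\xi\in\{-1,1\}^A$, $\bar\mu^{\xi}_{G,h}$ denotes $\bar\mu_{G,h}$ conditioned on $\bar\sigma_v=\xi_v$ for $v\in A$. The product measure $\bar\mu^{\xi_1/\xi_2}_{G,h}=\bar\mu^{\xi_1}_{G,h}\otimes\bar\mu^{\xi_2}_{G,h}$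 is a law on pairs $(\bar\sigma^1,\bar\sigma^2)$, viewed as elements of $\Theta^{\bar G}$ with $\Theta=\{-1,0,1\}^2$ (the value at $u\in\bar G$ is $(\bar\sigma^1_u,\bar\sigma^2_u)$). Partial order on $\Theta$: $(a,b)\succeq(c,d)$ iff $a\ge c$ and $b\le d$; extended coordinatewise to $\Theta^{\bar G}$. An event $\mathtt A\subset\Theta^{\bar G}$ is increasing if $x\in\mathtt A$ and $y\succeq x$ imply $y\in\mathtt A$. *)

From HB Require Import structures.
From mathcomp Require Import all_boot all_order all_algebra.
From mathcomp Require Import reals.
From mathcomp Require Import sequences exp.
Set Implicit Arguments. Unset Strict Implicit. Unset Printing Implicit Defensive.
Import Order.TTheory GRing.Theory Num.Theory.
Local Open Scope ring_scope.

(* A finite loopless graph is given by a vertex finType V, an edge finType E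
   and an endpoint map ends : E -> V * V with distinct endpoints.
   Gbar = V ⊔ E. *)
Definition Gbar (V E : finType) : finType := (V + E)%type.

(* spins in {-1,0,1} are encoded by 'I_3 through s |-> s - 1 *)
Definition sval (s : 'I_3) : int := (nat_of_ord s)%:Z - 1.

Definition xconf (V E : finType) := {ffun Gbar V E -> 'I_3}.

(* pairs of configurations = elements of Theta^{Gbar}, Theta = {-1,0,1}^2 *)
Definition pconf (V E : finType) := {ffun Gbar V E -> 'I_3 * 'I_3}.

Section Model.
Variables (V E : finType) (ends : E -> V * V).

Definition sv (s : xconf V E) (v : V) : int := sval (s (inl v)).
Definition se (s : xconf V E) (e : E) : int := sval (s (inr e)).

Definition admissible (s : xconf V E) : bool :=
  [forall v, sv s v != 0] &&
  [forall e, (`|sv s (ends e).1 - se s e| <= 1) && (`|sv s (ends e).2 - se s e| <= 1)].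

Definition agrees (A : {set V}) (xi : V -> int) (s : xconf V E) : bool :=
  [forall v in A, sv s v == xi v].

Variable R : realType.

Definition tpar (T : R) : R := (Num.sqrt (expR (2 / T) - 1))^-1.

Definition Wt (T : R) (a b : int) : R :=
  if b == a then 1 else if b == 0 then tpar T else 0.

Definition weight (T : R) (h : V -> R) (A : {set V}) (xi : V -> int)
  (s : xconf V E) : R :=
  (admissible s && agrees A xi s)%:R *
  (\prod_(e : E) (Wt T (sv s (ends e).1) (se s e) * Wt T (sv s (ends e).2) (se s e))) *
  expR (T^-1 * \sum_(v : V) h v * (sv s v)%:~R).

Definition Zpart T h A xi : R := \sum_(s : xconf V E) weight T h A xi s.

Definition mu T h A xi (s : xconf V E) : R := weight T h A xi s / Zpart T h A xi.

Definition pfst (x : pconf V E) : xconf V E := [ffun u => (x u).1].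
Definition psnd (x : pconf V E) : xconf V E := [ffun u => (x u).2].

Definition muPair T h A xi1 xi2 (Ev : {pred pconf V E}) : R :=
  \sum_(x : pconf V E | x \in Ev) mu T h A xi1 (pfst x) * mu T h A xi2 (psnd x).

End Model.

Definition theta_ge (p q : 'I_3 * 'I_3) : bool :=
  (sval q.1 <= sval p.1) && (sval p.2 <= sval q.2).

Definition pconf_ge (V E : finType) (y x : pconf V E) : Prop :=
  forall u, theta_ge (y u) (x u).

Definition increasing (V E : finType) (Ev : {pred pconf V E}) : Prop :=
  forall x y, x \in Ev -> pconf_ge y x -> y \in Ev.

From Pilot Require Import Defs.
From HB Require Import structures.
From mathcomp Require Import all_boot all_order all_algebra.
From mathcomp Require Import reals.
From mathcomp Require Import sequences exp.
From mathcomp Require Import ring lra.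
Import Order.TTheory GRing.Theory Num.Theory.
Set Implicit Arguments. Unset Strict Implicit. Unset Printing Implicit Defensive.
Local Open Scope ring_scope.

(* The FKG inequality follows from the Ahlswede-Daykin four functions
   theorem. Order Theta by the first spin increasing and the second one
   decreasing: pairs of extended configurations then form a distributive
   lattice (coordinatewise max/min), which embeds into a Boolean lattice by
   recording the threshold events {k < sigma1_u} and {sigma2_u <= k}.
   On admissible configurations an edge contributes t^2 if sigma_e = 0 and 1
   otherwise, whatever the spins of its endpoints, and the field term is
   additive; hence the weight of mu^xi is multiplicative under
   (s, t) |-> (max s t, min s t) on its support, the product measure
   mu^{xi1/xi2} is log-supermodular, and FKG applies. *)

(* [Defs.sval] is shadowed by the projection [sval] of sigma types. *)
Local Notation spin := Defs.sval.

Section FourFunctions.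
Variable R : realFieldType.

Lemma lerD_of_mul_le (p q k m : R) : 0 <= p -> 0 <= q -> 0 <= m ->
  p <= k -> q <= k -> p * q <= k * m -> p + q <= k + m.
Proof.
move=> p0 q0 m0 pk qk pqkm.
have [k0|k_neq0] := eqVneq k 0; first by rewrite k0 in pk qk *; lra.
have k_gt0 : 0 < k by rewrite lt_def k_neq0 (le_trans p0).
(* (k - p) (k - q) >= 0 gives k (p + q) <= k^2 + p q <= k (k + m). *)
have : 0 <= k * (k + m - p - q) by nra.
by rewrite pmulr_rge0 // => ?; lra.
Qed.

Lemma four_functions_bool (a0 a1 b0 b1 c0 c1 d0 d1 : R) :
  0 <= a0 -> 0 <= a1 -> 0 <= b0 -> 0 <= b1 -> 0 <= c0 -> 0 <= c1 -> 0 <= d0 -> 0 <= d1 ->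
  a0 * b0 <= c0 * d0 -> a1 * b1 <= c1 * d1 -> a0 * b1 <= c1 * d0 -> a1 * b0 <= c1 * d0 ->
  (a0 + a1) * (b0 + b1) <= (c0 + c1) * (d0 + d1).
Proof.
move=> a00 a10 b00 b10 c00 c10 d00 d10 h00 h11 h01 h10.
have cross : a0 * b1 + a1 * b0 <= c1 * d0 + c0 * d1.
  apply: lerD_of_mul_le; rewrite ?mulr_ge0 //.
  have -> : a0 * b1 * (a1 * b0) = a0 * b0 * (a1 * b1) by ring.
  have -> : c1 * d0 * (c0 * d1) = c0 * d0 * (c1 * d1) by ring.
  by apply: ler_pM; rewrite ?mulr_ge0.
have -> : (a0 + a1) * (b0 + b1) = a0 * b0 + a1 * b1 + (a0 * b1 + a1 * b0) by ring.
have -> : (c0 + c1) * (d0 + d1) = c0 * d0 + c1 * d1 + (c1 * d0 + c0 * d1) by ring.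
lra.
Qed.

Variable I : finType.

Lemma sum_subset_setD1 (S : {set I}) i (F : {set I} -> R) : i \in S ->
  \sum_(B : {set I} | B \subset S) F B =
  \sum_(B : {set I} | B \subset S :\ i) (F B + F (i |: B)).
Proof.
move=> iS; rewrite big_split /= (bigID (fun B : {set I} => i \in B)) /= addrC.
congr (_ + _); first by apply: eq_bigl => B; rewrite subsetD1.
rewrite (reindex_onto (fun B => i |: B) (fun B => B :\ i)) /=; last first.
  by move=> B /andP[_ iB]; rewrite setD1K.
apply: eq_bigl => B; rewrite subsetD1 setU11 andbT subUset sub1set iS /=.
case iB: (i \in B); last by rewrite setU1K ?iB ?eqxx ?andbT.
rewrite andbF; apply/negbTE/negP => /andP[_ /eqP eB].
by move: iB; rewrite -eB !inE eqxx.
Qed.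

Local Ltac set_by_cases :=
  apply/setP => ?; rewrite !inE; case: (_ == _); case: (_ \in _); case: (_ \in _).

Lemma four_functions_subset n (S : {set I}) (al be ga de : {set I} -> R) :
  #|S| = n ->
  (forall B, 0 <= al B) -> (forall B, 0 <= be B) ->
  (forall B, 0 <= ga B) -> (forall B, 0 <= de B) ->
  (forall B C, al B * be C <= ga (B :|: C) * de (B :&: C)) ->
  (\sum_(B : {set I} | B \subset S) al B) * (\sum_(B : {set I} | B \subset S) be B) <=
  (\sum_(B : {set I} | B \subset S) ga B) * (\sum_(B : {set I} | B \subset S) de B).
Proof.
elim: n S al be ga de => [|n IH] S al be ga de cardS al0 be0 ga0 de0 H.
  move/eqP: cardS; rewrite cards_eq0 => /eqP ->.
  have sum0 (F : {set I} -> R) : \sum_(B : {set I} | B \subset set0) F B = F set0.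
    by rewrite (eq_bigl (pred1 set0)) ?big_pred1_eq // => B; rewrite subset0.
  by rewrite !sum0; have := H set0 set0; rewrite setU0 setI0.
have [i iS] : exists i, i \in S by apply/set0Pn; rewrite -cards_eq0 cardS.
have cardSi : #|S :\ i| = n by move: cardS; rewrite (cardsD1 i) iS add1n => -[].
have sum_setD1_notin (F : {set I} -> R) :
    \sum_(B : {set I} | B \subset S :\ i) (F B + F (i |: B)) =
    \sum_(B : {set I} | B \subset S :\ i) (F (B :\ i) + F (i |: B)).
  apply: eq_bigr => B; rewrite subsetD1 => /andP[_ iB].
  by rewrite (setDidPl _) // disjoint_sym disjoints1.
rewrite !(sum_subset_setD1 _ iS) !sum_setD1_notin.
apply: IH => // [B|B|B|B|B C]; rewrite ?addr_ge0 //.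
apply: four_functions_bool; rewrite ?al0 ?be0 ?ga0 ?de0 //.
- by rewrite setDUl setDIl.
- have -> : i |: (B :|: C) = (i |: B) :|: (i |: C) by set_by_cases.
  have -> : i |: (B :&: C) = (i |: B) :&: (i |: C) by set_by_cases.
  exact: H.
- have -> : i |: (B :|: C) = (B :\ i) :|: (i |: C) by set_by_cases.
  have -> : (B :&: C) :\ i = (B :\ i) :&: (i |: C) by set_by_cases.
  exact: H.
- have -> : i |: (B :|: C) = (i |: B) :|: (C :\ i) by set_by_cases.
  have -> : (B :&: C) :\ i = (i |: B) :&: (C :\ i) by set_by_cases.
  exact: H.
Qed.

Theorem four_functions (al be ga de : {set I} -> R) :
  (forall B, 0 <= al B) -> (forall B, 0 <= be B) ->
  (forall B, 0 <= ga B) -> (forall B, 0 <= de B) ->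
  (forall B C, al B * be C <= ga (B :|: C) * de (B :&: C)) ->
  (\sum_B al B) * (\sum_B be B) <= (\sum_B ga B) * (\sum_B de B).
Proof.
have subsetT_sum (F : {set I} -> R) :
  \sum_B F B = \sum_(B : {set I} | B \subset setT) F B.
  by apply: eq_bigl => B; rewrite subsetT.
by rewrite !subsetT_sum; apply: four_functions_subset.
Qed.

End FourFunctions.

Section EmbeddedLattice.
Variables (R : realFieldType) (X I : finType).
Variables (join meet : X -> X -> X) (enc : X -> {set I}).
Hypothesis enc_inj : injective enc.
Hypothesis enc_join : forall x y, enc (join x y) = enc x :|: enc y.
Hypothesis enc_meet : forall x y, enc (meet x y) = enc x :&: enc y.

Let fiber_sum (F : X -> R) (S : {set I}) : R := \sum_(x | enc x == S) F x.

Let fiber_sum_enc (F : X -> R) x : fiber_sum F (enc x) = F x.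
Proof.
rewrite /fiber_sum (eq_bigl (pred1 x)) ?big_pred1_eq // => y.
by rewrite /= (inj_eq enc_inj).
Qed.

Let sum_fiber_sum (F : X -> R) : \sum_S fiber_sum F S = \sum_x F x.
Proof. by rewrite (partition_big enc predT). Qed.

Let fiber_sum_ge0 (F : X -> R) S : (forall x, 0 <= F x) -> 0 <= fiber_sum F S.
Proof. by move=> F0; apply: sumr_ge0. Qed.

Lemma four_functions_lattice (F1 F2 F3 F4 : X -> R) :
  (forall x, 0 <= F1 x) -> (forall x, 0 <= F2 x) ->
  (forall x, 0 <= F3 x) -> (forall x, 0 <= F4 x) ->
  (forall x y, F1 x * F2 y <= F3 (join x y) * F4 (meet x y)) ->
  (\sum_x F1 x) * (\sum_x F2 x) <= (\sum_x F3 x) * (\sum_x F4 x).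
Proof.
move=> F10 F20 F30 F40 H; rewrite -!sum_fiber_sum.
apply: four_functions => [S|S|S|S|S S']; rewrite ?fiber_sum_ge0 //.
have [x /eqP <-|noS] := pickP (fun x => enc x == S); last first.
  by rewrite {1}/fiber_sum big_pred0 // mul0r mulr_ge0 ?fiber_sum_ge0.
have [y /eqP <-|noS'] := pickP (fun y => enc y == S'); last first.
  by rewrite [fiber_sum F2 _]/fiber_sum big_pred0 // mulr0 mulr_ge0 ?fiber_sum_ge0.
by rewrite -enc_join -enc_meet !fiber_sum_enc.
Qed.

Theorem fkg_lattice (nu : X -> R) (EvA EvB : {pred X}) :
  (forall x, 0 <= nu x) ->
  (forall x y, nu x * nu y <= nu (join x y) * nu (meet x y)) ->
  (forall x y, x \in EvA -> join x y \in EvA) ->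
  (forall x y, y \in EvB -> join x y \in EvB) ->
  (\sum_(x in EvA) nu x) * (\sum_(x in EvB) nu x) <=
  (\sum_(x in predI EvA EvB) nu x) * \sum_x nu x.
Proof.
move=> nu0 nu_lat upA upB.
rewrite (big_mkcond (mem EvA)) (big_mkcond (mem EvB)) (big_mkcond (mem (predI _ _))).
apply: four_functions_lattice => [x|x|x|//|x y]; rewrite ?inE; try by case: ifP.
case: ifP => xA; last by rewrite mul0r mulr_ge0 //; case: ifP.
case: ifP => yB; last by rewrite mulr0 mulr_ge0 //; case: ifP.
by rewrite (upA x y xA : EvA _) (upB x y yB : EvB _).
Qed.

End EmbeddedLattice.

Lemma op_max_min d (T : orderType d) (U : Type) (op : U -> U -> U) (f : T -> U) a b :
  commutative op -> op (f (Order.max a b)) (f (Order.min a b)) = op (f a) (f b).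
Proof. by move=> opC; rewrite /Order.max /Order.min; case: ifP. Qed.

Lemma max_min_closed d (T : orderType d) (P : pred T) a b :
  P a -> P b -> P (Order.max a b) && P (Order.min a b).
Proof. by rewrite /Order.max /Order.min; case: ifP => _ -> ->. Qed.

Lemma strict_downset_inj d (T : orderType d) (a b : T) :
  (forall k, (k < a)%O = (k < b)%O) -> a = b.
Proof.
by move=> ltab; apply: le_anti; rewrite !leNgt -ltab ltxx ltab ltxx.
Qed.

Lemma upset_inj d (T : orderType d) (a b : T) :
  (forall k, (a <= k)%O = (b <= k)%O) -> a = b.
Proof. by move=> geab; apply: le_anti; rewrite geab lexx -geab lexx. Qed.

Lemma le_spin (a b : 'I_3) : (spin a <= spin b) = (a <= b)%O.
Proof. by rewrite /Defs.sval lerD2r lez_nat. Qed.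

Lemma spin_inj : injective spin.
Proof. by move=> a b /addIr [] /ord_inj. Qed.

Local Ltac spin_cases a := case: a => [[|[|[|?]]] ?] //.

Lemma dist_spin_max_min (a b c d : 'I_3) :
  `|spin a - spin c| <= 1 -> `|spin b - spin d| <= 1 ->
  (`|spin (Order.max a b) - spin (Order.max c d)| <= 1) &&
  (`|spin (Order.min a b) - spin (Order.min c d)| <= 1).
Proof. by spin_cases a; spin_cases b; spin_cases c; spin_cases d. Qed.

Definition edge_weight (R : realType) (T : R) (c : 'I_3) : R :=
  if spin c == 0 then tpar T else 1.

Lemma Wt_adjacent (R : realType) (T : R) (a c : 'I_3) :
  spin a != 0 -> `|spin a - spin c| <= 1 -> Wt T (spin a) (spin c) = edge_weight T c.
Proof. by spin_cases a; spin_cases c. Qed.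

Lemma tpar_ge0 (R : realType) (T : R) : 0 <= tpar T.
Proof. by rewrite /tpar invr_ge0 sqrtr_ge0. Qed.

Lemma Wt_ge0 (R : realType) (T : R) a b : 0 <= Wt T a b.
Proof. by rewrite /Wt; case: ifP => // _; case: ifP => // _; exact: tpar_ge0. Qed.

Definition xjoin (V E : finType) (s t : xconf V E) : xconf V E :=
  [ffun u => Order.max (s u) (t u)].
Definition xmeet (V E : finType) (s t : xconf V E) : xconf V E :=
  [ffun u => Order.min (s u) (t u)].

Section ExtendedIsing.
Variables (V E : finType) (ends : E -> V * V) (R : realType) (T : R) (h : V -> R).
Variables (A : {set V}) (xi : V -> int).
Implicit Types s t : xconf V E.

Local Notation admissible := (admissible ends).
Local Notation weight := (weight ends T h A xi).
Local Notation mu := (mu ends T h A xi).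

Lemma admissible_join_meet s t : admissible s -> admissible t ->
  admissible (xjoin s t) && admissible (xmeet s t).
Proof.
move=> /andP[/forallP s_v /forallP s_e] /andP[/forallP t_v /forallP t_e].
have vertex v : (sv (xjoin s t) v != 0) && (sv (xmeet s t) v != 0).
  by rewrite /sv !ffunE; exact: (max_min_closed (P := fun a => spin a != 0) (s_v v) (t_v v)).
have edge e : forall k : V,
    `|sv s k - se s e| <= 1 -> `|sv t k - se t e| <= 1 ->
    (`|sv (xjoin s t) k - se (xjoin s t) e| <= 1) &&
    (`|sv (xmeet s t) k - se (xmeet s t) e| <= 1).
  by move=> k; rewrite /sv /se !ffunE; apply: dist_spin_max_min.
apply/andP; split; apply/andP; split; apply/forallP => u;
  first [by case/andP: (vertex u) | case/andP: (s_e u) (t_e u) => s1 s2 /andP[t1 t2]].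
- by case/andP: (edge u _ s1 t1) => -> _; case/andP: (edge u _ s2 t2) => ->.
- by case/andP: (edge u _ s1 t1) => _ ->; case/andP: (edge u _ s2 t2) => _ ->.
Qed.

Lemma agrees_join_meet s t : agrees A xi s -> agrees A xi t ->
  agrees A xi (xjoin s t) && agrees A xi (xmeet s t).
Proof.
move=> /forallP s_A /forallP t_A.
have st v : v \in A -> s (inl v) = t (inl v).
  move=> vA; apply: spin_inj.
  by move: (s_A v) (t_A v); rewrite vA /sv => /eqP -> /eqP ->.
apply/andP; split; apply/forallP => v; apply/implyP => vA;
  by move: (s_A v); rewrite vA /sv ffunE -(st v vA) ?maxxx ?minxx.
Qed.

Lemma edge_Wt_admissible s e : admissible s ->
  Wt T (sv s (ends e).1) (se s e) * Wt T (sv s (ends e).2) (se s e) =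
  edge_weight T (s (inr e)) ^+ 2.
Proof.
move=> /andP[/forallP s_v /forallP s_e]; have /andP[e1 e2] := s_e e.
by rewrite (Wt_adjacent T (s_v _) e1) (Wt_adjacent T (s_v _) e2) expr2.
Qed.

Lemma weight_ge0 s : 0 <= weight s.
Proof.
rewrite /Defs.weight mulr_ge0 ?expR_ge0 // mulr_ge0 ?ler0n //.
by apply: prodr_ge0 => e _; rewrite mulr_ge0 ?Wt_ge0.
Qed.

Lemma weight_join_meet s t :
  admissible s && agrees A xi s -> admissible t && agrees A xi t ->
  weight (xjoin s t) * weight (xmeet s t) = weight s * weight t.
Proof.
move=> /andP[adm_s agr_s] /andP[adm_t agr_t].
have /andP[adm_j adm_m] := admissible_join_meet adm_s adm_t.
have /andP[agr_j agr_m] := agrees_join_meet agr_s agr_t.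
rewrite /Defs.weight adm_s agr_s adm_t agr_t adm_j adm_m agr_j agr_m !mul1r.
rewrite mulrACA [RHS]mulrACA; congr (_ * _).
  rewrite -!big_split /=; apply: eq_bigr => e _.
  rewrite !edge_Wt_admissible // !ffunE.
  exact: (op_max_min (fun c => edge_weight T c ^+ 2) _ _ (@mulrC _)).
rewrite -!expRD -!mulrDr -!big_split /=; congr (expR (_ * _)).
apply: eq_bigr => v _; rewrite -!mulrDr -!intrD /sv !ffunE.
by rewrite (op_max_min spin _ _ (@addrC _)).
Qed.

Lemma weight_supermodular s t :
  weight s * weight t <= weight (xjoin s t) * weight (xmeet s t).
Proof.
have W0 := weight_ge0.
case ok_s: (admissible s && agrees A xi s); last first.
  by rewrite {1}/Defs.weight ok_s !mul0r mulr_ge0.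
case ok_t: (admissible t && agrees A xi t); last first.
  by rewrite {2}/Defs.weight ok_t !(mul0r, mulr0) mulr_ge0.
by rewrite weight_join_meet.
Qed.

Lemma mu_ge0 s : 0 <= mu s.
Proof. by rewrite /Defs.mu mulr_ge0 ?invr_ge0 ?sumr_ge0 // => *; exact: weight_ge0. Qed.

Lemma mu_supermodular s t : mu s * mu t <= mu (xjoin s t) * mu (xmeet s t).
Proof.
rewrite /Defs.mu mulrACA [leRHS]mulrACA ler_wpM2r ?weight_supermodular //.
by rewrite mulr_ge0 // invr_ge0 sumr_ge0 // => *; exact: weight_ge0.
Qed.

(* The partition function may vanish, in which case mu is identically 0. *)
Lemma sum_mu_le1 : \sum_s mu s <= 1.
Proof.
rewrite /Defs.mu -mulr_suml -/(Zpart ends T h A xi).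
have [->|Z_neq0] := eqVneq (Zpart ends T h A xi) 0; first by rewrite mul0r ler01.
by rewrite divff.
Qed.

End ExtendedIsing.

Section PairConfigurations.
Variables V E : finType.
Implicit Types x y : pconf V E.

Definition pjoin x y : pconf V E :=
  [ffun u => (Order.max (x u).1 (y u).1, Order.min (x u).2 (y u).2)].
Definition pmeet x y : pconf V E :=
  [ffun u => (Order.min (x u).1 (y u).1, Order.max (x u).2 (y u).2)].

Lemma pfst_pjoin x y : pfst (pjoin x y) = xjoin (pfst x) (pfst y).
Proof. by apply/ffunP => u; rewrite !ffunE. Qed.
Lemma psnd_pjoin x y : psnd (pjoin x y) = xmeet (psnd x) (psnd y).
Proof. by apply/ffunP => u; rewrite !ffunE. Qed.
Lemma pfst_pmeet x y : pfst (pmeet x y) = xmeet (pfst x) (pfst y).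
Proof. by apply/ffunP => u; rewrite !ffunE. Qed.
Lemma psnd_pmeet x y : psnd (pmeet x y) = xjoin (psnd x) (psnd y).
Proof. by apply/ffunP => u; rewrite !ffunE. Qed.

Lemma pconf_ge_pjoinl x y : pconf_ge (pjoin x y) x.
Proof. by move=> u; rewrite /theta_ge ffunE /= !le_spin le_max ge_min !lexx. Qed.

Lemma pconf_ge_pjoinr x y : pconf_ge (pjoin x y) y.
Proof. by move=> u; rewrite /theta_ge ffunE /= !le_spin le_max ge_min !lexx !orbT. Qed.

Definition theta_enc x : {set Gbar V E * 'I_3 * bool} :=
  [set q | if q.2 then (q.1.2 < (x q.1.1).1)%O else ((x q.1.1).2 <= q.1.2)%O].

Lemma theta_enc_pjoin x y : theta_enc (pjoin x y) = theta_enc x :|: theta_enc y.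
Proof. by apply/setP => -[[u k] []]; rewrite !inE /= ffunE /= ?lt_max ?ge_min. Qed.

Lemma theta_enc_pmeet x y : theta_enc (pmeet x y) = theta_enc x :&: theta_enc y.
Proof. by apply/setP => -[[u k] []]; rewrite !inE /= ffunE /= ?lt_min ?ge_max. Qed.

Lemma theta_enc_inj : injective theta_enc.
Proof.
move=> x y /setP xy; apply/ffunP => u.
have [lt1 ge2] : (forall k, (k < (x u).1)%O = (k < (y u).1)%O) /\
                 (forall k, ((x u).2 <= k)%O = ((y u).2 <= k)%O).
  by split=> k; [have := xy (u, k, true) | have := xy (u, k, false)]; rewrite !inE.
by move: (strict_downset_inj lt1) (upset_inj ge2); case: (x u) (y u) => ? ? [? ?] /= -> ->.
Qed.

Lemma sum_pconf_prod (R : pzSemiRingType) (f g : xconf V E -> R) :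
  \sum_x f (pfst x) * g (psnd x) = (\sum_s f s) * (\sum_t g t).
Proof.
pose pair_of (st : xconf V E * xconf V E) : pconf V E := [ffun u => (st.1 u, st.2 u)].
have pfst_pair st : pfst (pair_of st) = st.1 by apply/ffunP => u; rewrite !ffunE.
have psnd_pair st : psnd (pair_of st) = st.2 by apply/ffunP => u; rewrite !ffunE.
have pair_of_bij : bijective pair_of.
  exists (fun x => (pfst x, psnd x)) => [[s t]|x]; first by rewrite pfst_pair psnd_pair.
  by apply/ffunP => u; rewrite !ffunE; case: (x u).
rewrite (reindex pair_of); last exact: onW_bij.
under eq_bigr do rewrite pfst_pair psnd_pair.
rewrite -(pair_big predT predT (fun s t => f s * g t)) /= mulr_suml.
by apply: eq_bigr => s _; rewrite mulr_sumr.
Qed.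
End PairConfigurations.

Section PairMeasure.
Variables (V E : finType) (ends : E -> V * V) (R : realType) (T : R) (h : V -> R).
Variables (A : {set V}) (xi1 xi2 : V -> int).
Implicit Types x y : pconf V E.

Local Notation mu1 := (mu ends T h A xi1).
Local Notation mu2 := (mu ends T h A xi2).

Definition pair_mu x : R := mu1 (pfst x) * mu2 (psnd x).

Lemma pair_mu_ge0 x : 0 <= pair_mu x.
Proof. by rewrite mulr_ge0 ?mu_ge0. Qed.

Lemma pair_mu_supermodular x y :
  pair_mu x * pair_mu y <= pair_mu (pjoin x y) * pair_mu (pmeet x y).
Proof.
rewrite /pair_mu pfst_pjoin psnd_pjoin pfst_pmeet psnd_pmeet.
rewrite mulrACA [leRHS]mulrACA [X in _ <= _ * X]mulrC.
by apply: ler_pM; rewrite 1?mulr_ge0 ?mu_ge0 //; apply: mu_supermodular.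
Qed.

Lemma sum_pair_mu_le1 : \sum_x pair_mu x <= 1.
Proof.
rewrite sum_pconf_prod mulr_ile1 ?sum_mu_le1 //; apply: sumr_ge0 => *; exact: mu_ge0.
Qed.

End PairMeasure.

Theorem lemma2p3 (R : realType) (V E : finType) (ends : E -> V * V)
  (loopless : forall e, (ends e).1 != (ends e).2)
  (A : {set V}) (xi1 xi2 : V -> int)
  (hxi1 : forall v, v \in A -> (xi1 v == 1) || (xi1 v == -1))
  (hxi2 : forall v, v \in A -> (xi2 v == 1) || (xi2 v == -1))
  (h : V -> R) (T : R) (hT : 0 < T)
  (EvA EvB : {pred pconf V E}) :
  increasing EvA -> increasing EvB ->
  muPair ends T h A xi1 xi2 (predI EvA EvB) >=
  muPair ends T h A xi1 xi2 EvA * muPair ends T h A xi1 xi2 EvB.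
Proof.
move=> incA incB.
have upA x y : x \in EvA -> pjoin x y \in EvA.
  by move=> xA; apply: incA xA (pconf_ge_pjoinl x y).
have upB x y : y \in EvB -> pjoin x y \in EvB.
  by move=> yB; apply: incB yB (pconf_ge_pjoinr x y).
have := fkg_lattice (@theta_enc_inj V E) (@theta_enc_pjoin V E) (@theta_enc_pmeet V E)
  (pair_mu_ge0 ends T h A xi1 xi2) (pair_mu_supermodular ends T h A xi1 xi2) upA upB.
move/le_trans; apply.
by rewrite ler_piMr ?sumr_ge0 ?sum_pair_mu_le1 // => *; exact: pair_mu_ge0.
Qed.
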